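(* Let $\mathbb{B}$ be a complete Boolean algebra and $F$ a filter on $\mathbb{B}$. Suppose that for each $n<\omega$ we are given a countable maximal antichain $A_n$ of $\mathbb{B}$ and a bijection $f_n\colon A_n\to A_n$ such that: $F=\{b\in\mathbb{B}: \{a\in A_0: a\wedge\neg b>\mathbb{0}\}\text{ is finite}\}$ and $f_0$ is the identity on $A_0$; $f_n=f_n^{-1}$ for every $n$; and for all $m<n<\omega$, $\bigvee\{b\in A_n: \exists a\in A_m\,(b\le a\text{ and }f_n(b)\le f_m(a))\}\in F$. Then there exist a countable maximal antichain $A_\infty$ of $\mathbb{B}$ and a bijection $f_\infty\colon A_\infty\to A_\infty$ such that $f_\infty=f_\infty^{-1}$ and, for every $n<\omega$, $\bigvee\{b\in A_\infty: \exists a\in A_n\,(b\le a\text{ and }f_\infty(b)\le f_n(a))\}\in F$. *)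

From HB Require Import structures.
From mathcomp Require Import all_boot all_order.
From mathcomp Require Import boolp classical_sets cardinality.

Set Implicit Arguments.
Unset Strict Implicit.
Unset Printing Implicit Defensive.

Import Order.Theory.

Section BA.
Context {d : Order.disp_t} {B : ctbDistrLatticeType d}.

Local Notation le := (@Order.le d B).
Local Notation meet := (@Order.meet d B).
Local Notation bot := (@Order.bottom d B).
Local Notation top := (@Order.top d B).

Definition is_sup (S : set B) (s : B) : Prop :=
  (forall x, S x -> le x s) /\ (forall u, (forall x, S x -> le x u) -> le s u).

Definition complete_BA : Prop := forall S : set B, exists s, is_sup S s.

(* "\bigvee S \in F" (the supremum is unique by antisymmetry) *)
Definition sup_in (F : set B) (S : set B) : Prop :=
  exists s, is_sup S s /\ F s.

Definition is_filter (F : set B) : Prop :=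
  F top /\ (forall x y, F x -> le x y -> F y) /\
  (forall x y, F x -> F y -> F (meet x y)).

Definition antichain (A : set B) : Prop :=
  (forall a, A a -> a != bot) /\
  (forall a b, A a -> A b -> a <> b -> meet a b = bot).

Definition maximal_antichain (A : set B) : Prop :=
  antichain A /\ (forall b, b != bot -> exists2 a, A a & meet a b != bot).

Definition countable_maximal_antichain (A : set B) : Prop :=
  countable A /\ maximal_antichain A.

Definition bij_on (A : set B) (f : B -> B) : Prop :=
  (forall a, A a -> A (f a)) /\
  (forall a b, A a -> A b -> f a = f b -> a = b) /\
  (forall b, A b -> exists2 a, A a & f a = b).

Definition involutive_on (A : set B) (f : B -> B) : Prop :=
  forall a, A a -> f (f a) = a.

Definition agree_set (A' : set B) (f' : B -> B) (A : set B) (f : B -> B)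
  : set B :=
  fun b => A' b /\ exists2 a, A a & le b a /\ le (f' b) (f a).

End BA.

(* Fix, for every pair m < n, the supremum s m n of the agreement set of
   (A n, f n) with (A m, f m); by hypothesis every element of A 0 lies below
   s m n with finitely many exceptions.  Enumerate A 0 injectively by idx.
   An atom a of A 0 is "good up to k" when it lies below every s m n with
   m < n <= k, and its level is the largest k <= idx a up to which it is good.
   The limit antichain is the union, over a in A 0, of the "pieces"
     piece a = {x in A (level a) | x <= a and f (level a) x <= a},
   with the limit map acting as f (level a) on piece a.  The pieces are
   closed under their map, they cover a (this uses a <= s 0 (level a)), and
   an atom a that is good up to n with n <= idx a has its whole piece inside
   the agreement set with (A n, f n).  Only finitely many atoms fail one of
   these two conditions, which gives the agreement with every (A n, f n). *)
From HB Require Import structures.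
From mathcomp Require Import all_boot all_order.
From mathcomp Require Import boolp classical_sets cardinality.

Set Implicit Arguments.
Unset Strict Implicit.
Unset Printing Implicit Defensive.

Import Order.Theory.
Local Open Scope classical_set_scope.
Local Open Scope order_scope.

Fixpoint last_sat (Q : nat -> Prop) (i : nat) : nat :=
  match i with
  | 0 => 0
  | j.+1 => if asbool (Q j.+1) then j.+1 else last_sat Q j
  end.

Lemma last_satP (Q : nat -> Prop) i : Q 0 -> Q (last_sat Q i).
Proof. by move=> Q0; elim: i => [|i IH] //=; case: asboolP. Qed.

Lemma last_sat_max (Q : nat -> Prop) i j :
  Q j -> (j <= i)%N -> (j <= last_sat Q i)%N.
Proof.
move=> Qj; elim: i => [|i IH] /=; first by rewrite leqn0 => /eqP ->.
case: asboolP => // nQ; rewrite leq_eqVlt => /orP[/eqP Eji|]; last exact: IH.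
by rewrite Eji in Qj.
Qed.

Lemma finite_inj_lt T (S : set T) (g : T -> nat) n :
  {in S &, injective g} -> finite_set [set a | S a /\ (g a < n)%N].
Proof.
move=> g_inj; set S' := [set a | _].
have g_inj' : {in S' &, injective g}.
  by move=> x y /set_mem[Sx _] /set_mem[Sy _]; apply: g_inj; apply: mem_set.
rewrite -(eq_finite_set (inj_card_eq g_inj')).
by apply: sub_finite_set (finite_II n) => _ [a [_ an] <-].
Qed.

Section BooleanAlgebraFacts.
Context {d : Order.disp_t} {B : ctbDistrLatticeType d}.
Implicit Types (a g s x : B) (A S : set B).

Lemma lt0_meet_compl a s : (\bot < a `&` ~` s) = ~~ (a <= s).
Proof. by rewrite lt0x disj_leC complK. Qed.

Lemma le_complU a g : a <= ~` a `|` g -> a <= g.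
Proof. by rewrite disjoint_lexUr // meetxC. Qed.

Lemma antichain_le_uniq A a a' x : antichain A -> A a -> A a' ->
  x != \bot -> x <= a -> x <= a' -> a = a'.
Proof.
move=> [_ disjA] Aa Aa' nzx xa xa'; apply: contrapT => neq.
move/eqP: nzx; apply; apply/eqP.
by rewrite -lex0 -(disjA _ _ Aa Aa' neq) lexI xa xa'.
Qed.

Lemma antichain_le_sup A S x s : antichain A -> A x -> S `<=` A ->
  is_sup S s -> x <= s -> S x.
Proof.
move=> [nzA disjA] Ax SA [_ s_least] xs; apply: contrapT => nSx.
have s_le : s <= ~` x.
  apply: s_least => y Sy; rewrite -disj_leC meetC; apply/eqP.
  by apply: disjA => //; [exact: SA | move=> Exy; rewrite -Exy in Sy].
have := nzA _ Ax; rewrite -lex0 -(meetxC x) lexI lexx.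
by rewrite (le_trans xs s_le).
Qed.

End BooleanAlgebraFacts.

Section Amalgamation.
Context {d : Order.disp_t} {B : ctbDistrLatticeType d}.
Variables (A : nat -> set B) (f : nat -> B -> B) (s : nat -> nat -> B)
  (idx : B -> nat).
Hypothesis complB : complete_BA (B := B).
Hypothesis countA : forall n, countable (A n).
Hypothesis maxA : forall n, maximal_antichain (A n).
Hypothesis bijA : forall n, bij_on (A n) (f n).
Hypothesis invA : forall n, involutive_on (A n) (f n).
Hypothesis f0_id : forall a, A 0 a -> f 0 a = a.
Hypothesis s_sup : forall m n, (m < n)%N ->
  is_sup (agree_set (A n) (f n) (A m) (f m)) (s m n).
Hypothesis s_cofinite : forall m n, (m < n)%N ->
  finite_set [set a | A 0 a /\ ~ a <= s m n].
Hypothesis idx_inj : {in A 0 &, injective idx}.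

Let antiA n : antichain (A n). Proof. by case: (maxA n). Qed.

Definition good (a : B) (k : nat) : Prop :=
  forall m n, (m < n)%N -> (n <= k)%N -> a <= s m n.

Definition level (a : B) : nat := last_sat (good a) (idx a).

Definition piece (a : B) : set B :=
  [set x | A (level a) x /\ x <= a /\ f (level a) x <= a].

Definition Ainf : set B := [set x | exists2 a, A 0 a & piece a x].

Definition owner (x : B) : B := xget \bot [set a | A 0 a /\ piece a x].

Definition finf (x : B) : B := f (level (owner x)) x.

Lemma good0 a : good a 0.
Proof. by move=> m n mn; rewrite leqn0 => /eqP En; rewrite En in mn. Qed.

Lemma good_level a : good a (level a).
Proof. exact: (@last_satP (good a)) (good0 a). Qed.

Lemma le_s_level a m : (m < level a)%N -> a <= s m (level a).
Proof. by move=> m_lt; exact: good_level. Qed.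

Lemma level_ge a n : (n <= idx a)%N -> good a n -> (n <= level a)%N.
Proof. by move=> n_idx gn; apply: (@last_sat_max (good a)). Qed.

Lemma good_succ a k : good a k ->
  (forall m, (m < k.+1)%N -> a <= s m k.+1) -> good a k.+1.
Proof.
move=> gk col m n mn; rewrite leq_eqVlt => /orP[/eqP En|]; last exact: gk.
by rewrite En in mn *; exact: col.
Qed.

Lemma piece_owner_uniq a a' x : A 0 a -> A 0 a' -> piece a x -> x <= a' ->
  a = a'.
Proof.
move=> Aa Aa' [Ax [xa _]] xa'.
exact: antichain_le_uniq (antiA 0) Aa Aa' ((antiA _).1 _ Ax) xa xa'.
Qed.

Lemma owner_piece a x : A 0 a -> piece a x -> owner x = a.
Proof.
move=> Aa px; apply: xget_unique => [//|a' [Aa' pa'x]].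
by apply: piece_owner_uniq Aa' Aa pa'x _; case: px => _ [].
Qed.

(* Each piece is closed under its map, since f (level a) is an involution. *)
Lemma piece_f a x : piece a x -> piece a (f (level a) x).
Proof.
move=> [Ax [xa fxa]]; split; first exact: (bijA _).1.
by rewrite invA.
Qed.

Lemma finf_piece a x : A 0 a -> piece a x -> finf x = f (level a) x.
Proof. by move=> Aa px; rewrite /finf (owner_piece Aa px). Qed.

(* The piece of a covers a: the parts of A (level a) below a agree with
   the identity f 0 and hence are mapped below a. *)
Lemma piece_cover a g : A 0 a -> is_sup (piece a) g -> a <= g.
Proof.
move=> Aa [g_ub _]; apply: le_complU.
have [lvl0|lvl_gt0] := posnP (level a).
  by apply: lexUr; apply: g_ub; rewrite /piece /= lvl0 f0_id.
have [_ s_least] := s_sup lvl_gt0.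
apply: le_trans (le_s_level lvl_gt0) _.
apply: s_least => y [Ay [a' Aa' [ya' fya']]]; rewrite f0_id // in fya'.
have [Ea'|neq] := pselect (a' = a).
  by rewrite Ea' in ya' fya'; apply: lexUr; apply: g_ub.
apply: lexUl; apply: le_trans ya' _; rewrite -disj_leC; apply/eqP.
exact: (antiA 0).2 _ _ Aa' Aa neq.
Qed.

(* Ainf is contained in the countable union of the A n. *)
Lemma Ainf_countable : countable Ainf.
Proof.
apply: (@sub_countable _ _ _ (\bigcup_(n in setT) A n)).
  by apply: subset_card_le => x [a _ [Ax _]]; exists (level a).
exact: bigcup_countable.
Qed.

(* Elements of one piece are disjoint as members of A (level a); elements of
   different pieces lie below disjoint atoms of A 0. *)
Lemma Ainf_antichain : antichain Ainf.
Proof.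
split=> [x [a _ [Ax _]]|x y [a Aa px] [b Ab py] neq].
  exact: (antiA _).1 Ax.
have [Eab|Nab] := pselect (a = b).
  rewrite -Eab in py; case: px py => Ax _ [Ay _].
  exact: (antiA _).2 _ _ Ax Ay neq.
case: px py => _ [xa _] [_ [yb _]].
by apply/eqP; rewrite -lex0 -((antiA 0).2 _ _ Aa Ab Nab) leI2.
Qed.

(* A nonzero b meets some atom a of A 0; as the piece of a covers a, b meets
   a member of that piece. *)
Lemma Ainf_maximal : maximal_antichain Ainf.
Proof.
split; first exact: Ainf_antichain.
move=> b nzb; have [a Aa ab] := (maxA 0).2 b nzb.
have [g g_sup] := complB (piece a).
apply: contrapT => none; move/eqP: ab; apply; apply/eqP; rewrite disj_leC.
apply: le_trans (piece_cover Aa g_sup) (g_sup.2 _ _) => x px.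
rewrite -disj_leC; apply: contrapT => nzxb; apply: none.
by exists x; [exists a | apply/negP].
Qed.

Lemma finf_maps x : Ainf x -> Ainf (finf x).
Proof.
by move=> [a Aa px]; exists a; rewrite // (finf_piece Aa px); exact: piece_f.
Qed.

Lemma finf_involutive : involutive_on Ainf finf.
Proof.
move=> x [a Aa px]; rewrite (finf_piece Aa px) (finf_piece Aa (piece_f px)).
by apply: invA; case: px.
Qed.

(* finf is injective since the images of two elements determine their common
   piece, on which finf is the bijection f (level a). *)
Lemma finf_bij : bij_on Ainf finf.
Proof.
split; first exact: finf_maps.
split=> [x y [a Aa px] [b Ab py]|y Ay]; last first.
  by exists (finf y); [exact: finf_maps | exact: finf_involutive].
rewrite (finf_piece Aa px) (finf_piece Ab py) => Efxy.
have Eba : b = a.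
  apply: piece_owner_uniq Ab Aa (piece_f py) _.
  by case: (piece_f px) => _ []; rewrite Efxy.
subst b; case: px py => Ax _ [Ay _].
exact: (bijA _).2.1 _ _ Ax Ay Efxy.
Qed.

Lemma finite_bad_column n :
  finite_set [set a | A 0 a /\ exists2 m, (m < n)%N & ~ a <= s m n].
Proof.
apply: sub_finite_set (bigcup_finite (finite_II n) (fun m mn => s_cofinite mn)).
by move=> a [Aa [m mn nle]]; exists m.
Qed.

Lemma finite_not_good k : finite_set [set a | A 0 a /\ ~ good a k].
Proof.
elim: k => [|k IH].
  by apply: sub_finite_set (finite_set0 B) => a [_ /(_ (good0 a))].
apply: (@sub_finite_set _ _ ([set a | A 0 a /\ ~ good a k] `|`
  [set a | A 0 a /\ exists2 m, (m < k.+1)%N & ~ a <= s m k.+1])); last first.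
  by rewrite finite_setU; split; [exact: IH | exact: finite_bad_column].
move=> a [Aa ng]; have [gk|ngk] := pselect (good a k); last by left.
right; split=> //; apply: contrapT => col; apply: ng; apply: good_succ gk _.
by move=> m mk; apply: contrapT => nle; apply: col; exists m.
Qed.

(* For n <= level a the piece of a lies in the agreement set with (A n, f n):
   its members lie below a, hence below s n (level a). *)
Lemma piece_agree a n : A 0 a -> (n <= level a)%N ->
  piece a `<=` agree_set Ainf finf (A n) (f n).
Proof.
move=> Aa n_lvl x px; split; first by exists a.
rewrite (finf_piece Aa px); case: (px) => Ax [xa _].
move: n_lvl; rewrite leq_eqVlt => /orP[/eqP En|n_lt].
  by exists x; rewrite ?En.
have x_agree : agree_set (A (level a)) (f (level a)) (A n) (f n) x.
  apply: antichain_le_sup (antiA _) Ax _ (s_sup n_lt) _ => [y []//|].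
  exact: le_trans xa (le_s_level n_lt).
by case: x_agree => _ [a' Aa' agree]; exists a'.
Qed.

(* Agreement with (A n, f n): an atom a with n <= idx a which is good up to
   n is covered by its piece, which lies in the agreement set; the remaining
   atoms are finitely many. *)
Lemma Ainf_agree n t : is_sup (agree_set Ainf finf (A n) (f n)) t ->
  finite_set [set a | A 0 a /\ ~ a <= t].
Proof.
move=> t_sup.
apply: (@sub_finite_set _ _ ([set a | A 0 a /\ (idx a < n)%N] `|`
  [set a | A 0 a /\ ~ good a n])); last first.
  rewrite finite_setU; split; first exact: finite_inj_lt.
  exact: finite_not_good.
move=> a [Aa not_le]; have [small|big] := ltnP (idx a) n; first by left.
have [gn|ngn] := pselect (good a n); last by right.
exfalso; apply: not_le; have [g g_sup] := complB (piece a).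
apply: le_trans (piece_cover Aa g_sup) (g_sup.2 _ _) => x px.
exact: t_sup.1 _ (piece_agree Aa (level_ge big gn) px).
Qed.

(* The construction, with the filter replaced by cofiniteness in A 0. *)
Theorem amalgamation : exists (Ainf : set B) (finf : B -> B),
  [/\ countable_maximal_antichain Ainf, bij_on Ainf finf,
      involutive_on Ainf finf &
      forall n, exists2 t, is_sup (agree_set Ainf finf (A n) (f n)) t &
        finite_set [set a | A 0 a /\ ~ a <= t]].
Proof.
exists Ainf, finf; split.
- exact: (conj Ainf_countable Ainf_maximal).
- exact: finf_bij.
- exact: finf_involutive.
- move=> n; have [t t_sup] := complB (agree_set Ainf finf (A n) (f n)).
  by exists t => //; exact: (Ainf_agree t_sup).
Qed.

End Amalgamation.

Theorem mainTheorem7 (d : Order.disp_t) (B : ctbDistrLatticeType d)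
  (F : set B) (A : nat -> set B) (f : nat -> B -> B) :
  complete_BA (B := B) ->
  is_filter F ->
  (forall n, countable_maximal_antichain (A n)) ->
  (forall n, bij_on (A n) (f n)) ->
  F = (fun b : B => finite_set (fun a : B => A 0%N a /\
          (@Order.lt d B (@Order.bottom d B)
             (@Order.meet d B a (@Order.compl d B b))))) ->
  (forall a, A 0%N a -> f 0%N a = a) ->
  (forall n, involutive_on (A n) (f n)) ->
  (forall m n : nat, (m < n)%N -> sup_in F (agree_set (A n) (f n) (A m) (f m))) ->
  exists (Ainf : set B) (finf : B -> B),
    countable_maximal_antichain Ainf /\ bij_on Ainf finf /\
    involutive_on Ainf finf /\
    (forall n, sup_in F (agree_set Ainf finf (A n) (f n))).
Proof.
move=> complB _ HA bijA HF f0_id invA Hsup.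
have F_cofinite b : F b = finite_set [set a | A 0 a /\ ~ a <= b].
  rewrite HF; congr finite_set; apply/funext => a; apply/propext.
  by rewrite /= lt0_meet_compl; split=> -[Aa /negP nab]; split.
have /choice[s s_spec] : forall mn : nat * nat, exists t, (mn.1 < mn.2)%N ->
    is_sup (agree_set (A mn.2) (f mn.2) (A mn.1) (f mn.1)) t /\ F t.
  move=> [m n] /=; have [mn|nmn] := pselect (m < n)%N.
    by have [t t_spec] := Hsup m n mn; exists t.
  by exists \bot => /nmn.
have s_sup m n (mn : (m < n)%N) :
    is_sup (agree_set (A n) (f n) (A m) (f m)) (s (m, n)).
  exact: (s_spec (m, n) mn).1.
have s_cofinite m n (mn : (m < n)%N) :
    finite_set [set a | A 0 a /\ ~ a <= s (m, n)].
  by rewrite -F_cofinite; exact: (s_spec (m, n) mn).2.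
have [idx idx_inj] := countable_injP _ (HA 0%N).1.
have [Ainf [finf [cmA bij inv agree]]] :=
  amalgamation complB (fun n => (HA n).1) (fun n => (HA n).2) bijA invA f0_id
    s_sup s_cofinite idx_inj.
exists Ainf, finf; do 3!split=> //; move=> n.
by have [t t_sup t_cof] := agree n; exists t; rewrite F_cofinite.
Qed.
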